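(* Let $W$ be a (1-safe) DAW-net. For every state $(M,\eta)$ of $W$ and every guard $\Phi$ over the data model of $W$ (for which the translation $[\Phi]$ is defined), $$\mathcal{D},\eta\models\Phi\quad\text{iff}\quad\Psi(M,\eta)\models[\Phi].$$
   Context: Data model $\mathcal{D}=(\mathcal{V},\Delta,\mathrm{dm},\mathrm{ord})$: variables $\mathcal{V}$; domains $\Delta=\{\Delta_1,\dots,\Delta_n\}$ (not necessarily disjoint), $\mathrm{dm}:\mathcal{V}\to\Delta$ total surjective giving each variable its finite domain; $\mathrm{ord}$ a partial function giving partial orders $\le_{\Delta_i}$ on some domains. Assignments: partial functions $\eta$ with $\eta(v)\in\mathrm{dm}(v)$. Guards: $\Phi::=\mathit{true}\mid\mathrm{def}(v)\mid t_1=t_2\mid t_1\le t_2\mid\neg\Phi\mid\Phi\wedge\Phi$, $t_i\in\mathcal{V}\cup\bigcup_i\Delta_i$. With $t[\eta]=\eta(t)$ if $t$ is a variable on which $\eta$ is defined and $t$ otherwise: $\mathcal{D},\eta\models\mathrm{def}(v)$ iff $\eta(v)$ defined; $t_1=t_2$ iff $t_1[\eta],t_2[\eta]$ are constants and equal; $t_1\le t_2$ iff $t_1[\eta],t_2[\eta]\in\Delta_i$ for some $i$ with $\mathrm{ord}(\Delta_i)$ defined and $t_1[\eta]\le_{\Delta_i}t_2[\eta]$; $\mathit{true}$, $\neg$, $\wedge$ as usual. A DAW-net $W=\langle\mathcal{D},(P,T,F),\mathrm{wr},\mathrm{gd}\rangle$ has a workflow Petri net with places $P$ and transitions $T$, for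 each $t$ a partial function $\mathrm{wr}(t)$ with $\mathrm{wr}(t)(v)\subseteq\mathrm{dm}(v)$ and a guard $\mathrm{gd}(t)$; a state is $(M,\eta)$ with $M:P\to\mathbb{N}$ a marking. $W$ is assumed 1-safe; $\mathcal{V}'$ is the finite set of variables appearing in $W$ (states considered have $\mathrm{dom}(\eta)\subseteq\mathcal{V}'$). Planning state: a function assigning to each $v\in\mathcal{V}'$ a value in $\mathrm{dm}(v)\cup\{\mathrm{null}\}$ ($\mathrm{null}$ a fresh constant) and to each $p\in P$ a value in $\{\mathrm{true},\mathrm{false}\}$. $\Psi(M,\eta)$ maps $v\mapsto\eta(v)$ if defined, $v\mapsto\mathrm{null}$ otherwise, and $p\mapsto\mathrm{true}$ if $M(p)>0$, $p\mapsto\mathrm{false}$ if $M(p)=0$. The rigid relation $\mathrm{ord}=\bigcup_i\{(o,o')\in\Delta_i^2\mid o\le_{\Delta_i}o'\}$ (over domains with $\mathrm{ord}(\Delta_i)$ defined). Preconditions are Boolean combinations of $\mathrm{true}$, equalities $z_1=z_2$ and $\mathrm{ord}(z_1,z_2)$ where $z_j$ are constants or state variables; a state $s$ satisfies them after replacing each state variable $x$ by $s(x)$ (equality being identity, $\mathrm{ord}(a,b)$ membership). The translation $[\cdot]$: $[\mathit{true}]=\mathrm{true}$; $[\mathrm{def}(v)]=\neg(v=\mathrm{null})$; $[v=t_2]=\neg(v=\mathrm{null})\wedge(v=t_2)$; $[t_1\le t_2]=\mathrm{ord}(t_1,t_2)$; $[\neg\Phi]=\neg[\Phi]$; $[\Phi_1\wedge\Phi_2]=[\Phi_1]\wedge[\Phi_2]$.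 *)

From mathcomp Require Import all_boot.
Set Implicit Arguments.
Unset Strict Implicit.
Unset Printing Implicit Defensive.

(* Variables: type [dvar]; constants: eqType [dval]; the finite family   *)
(* of domains is indexed by the finType [didx]; each domain is a finite *)
(* list of constants (domains need not be disjoint).                    *)
Record DataModel := {
  dvar : Type;
  dval : eqType;
  didx : finType;
  Delta : didx -> seq dval;
  dm : dvar -> didx;
  dm_surj : forall i : didx, exists v : dvar, dm v = i;
  ord : didx -> option (rel dval);
  ord_po : forall (i : didx) (le : rel dval), ord i = Some le ->
    [/\ {in Delta i, reflexive le},
        {in Delta i &, antisymmetric le} &
        {in Delta i & &, forall y x z, le x y -> le y z -> le x z}]
}.

Definition assignment (D : DataModel) := dvar D -> option (dval D).
Definition assignment_ok (D : DataModel) (eta : assignment D) : Prop :=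
  forall v c, eta v = Some c -> c \in Delta (dm v).

Inductive term (V C : Type) := TVar of V | TConst of C.
Arguments TVar {V C}. Arguments TConst {V C}.

Inductive guard (V C : Type) :=
| GTrue
| GDef of V
| GEq of term V C & term V C
| GLe of term V C & term V C
| GNot of guard V C
| GAnd of guard V C & guard V C.
Arguments GTrue {V C}. Arguments GDef {V C}. Arguments GEq {V C}.
Arguments GLe {V C}. Arguments GNot {V C}. Arguments GAnd {V C}.

Definition dguard (D : DataModel) := guard (dvar D) (dval D).

Definition term_wf (D : DataModel) (t : term (dvar D) (dval D)) : Prop :=
  match t with TVar _ => True | TConst c => exists i, c \in Delta i end.
Fixpoint guard_wf (D : DataModel) (g : dguard D) : Prop :=
  match g with
  | GTrue => True
  | GDef _ => True
  | GEq t1 t2 => term_wf t1 /\ term_wf t2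
  | GLe t1 t2 => term_wf t1 /\ term_wf t2
  | GNot g => guard_wf g
  | GAnd g1 g2 => guard_wf g1 /\ guard_wf g2
  end.

Definition term_has_var (V C : Type) (v : V) (t : term V C) : Prop :=
  match t with TVar w => w = v | TConst _ => False end.
Fixpoint guard_has_var (V C : Type) (v : V) (g : guard V C) : Prop :=
  match g with
  | GTrue => False
  | GDef w => w = v
  | GEq t1 t2 => term_has_var v t1 \/ term_has_var v t2
  | GLe t1 t2 => term_has_var v t1 \/ term_has_var v t2
  | GNot g => guard_has_var v g
  | GAnd g1 g2 => guard_has_var v g1 \/ guard_has_var v g2
  end.

Definition term_subst (D : DataModel) (eta : assignment D)
  (t : term (dvar D) (dval D)) : term (dvar D) (dval D) :=
  match t with
  | TVar v => match eta v with Some c => TConst c | None => t end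
  | TConst _ => t
  end.

Fixpoint gsat (D : DataModel) (eta : assignment D) (g : dguard D) : Prop :=
  match g with
  | GTrue => True
  | GDef v => eta v <> None
  | GEq t1 t2 => exists c1 c2, term_subst eta t1 = TConst c1 /\
                   term_subst eta t2 = TConst c2 /\ c1 = c2
  | GLe t1 t2 => exists c1 c2, term_subst eta t1 = TConst c1 /\
                   term_subst eta t2 = TConst c2 /\
                   exists i le, ord i = Some le /\ c1 \in Delta i /\
                                c2 \in Delta i /\ le c1 c2
  | GNot g => ~ gsat eta g
  | GAnd g1 g2 => gsat eta g1 /\ gsat eta g2
  end.

Record DAWnet (D : DataModel) := {
  place : finType;
  trans : finType;
  flowPT : place -> trans -> bool;   (* F restricted to P x T *)
  flowTP : trans -> place -> bool;   (* F restricted to T x P *)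
  wr : trans -> dvar D -> option (seq (dval D));
  wr_ok : forall t v s, wr t v = Some s -> {subset s <= Delta (dm v)};
  gd : trans -> dguard D
}.

Definition var_in_net (D : DataModel) (W : DAWnet D) (v : dvar D) : Prop :=
  exists t : trans W, guard_has_var v (gd t) \/ wr t v <> None.

Definition marking (D : DataModel) (W : DAWnet D) := place W -> nat.

Inductive pval (C : Type) := PConst of C | PNull | PBool of bool.
Arguments PConst {C}. Arguments PNull {C}. Arguments PBool {C}.

Inductive svar (V P : Type) := SVar of V | SPlace of P.
Arguments SVar {V P}. Arguments SPlace {V P}.

Definition pstate (D : DataModel) (W : DAWnet D) :=
  svar (dvar D) (place W) -> pval (dval D).

Definition Psi (D : DataModel) (W : DAWnet D) (M : marking W)
  (eta : assignment D) : pstate W :=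
  fun x => match x with
  | SVar v => match eta v with Some c => PConst c | None => PNull end
  | SPlace p => PBool (0 < M p)
  end.

Definition ordRel (D : DataModel) (a b : pval (dval D)) : Prop :=
  exists i le o o', ord i = Some le /\ a = PConst o /\ b = PConst o' /\
    o \in Delta i /\ o' \in Delta i /\ le o o'.

Inductive zterm (V P C : Type) := ZC of pval C | ZS of svar V P.
Arguments ZC {V P C}. Arguments ZS {V P C}.

Inductive precond (V P C : Type) :=
| PTrue
| PEq of zterm V P C & zterm V P C
| POrd of zterm V P C & zterm V P C
| PNot of precond V P C
| PAnd of precond V P C & precond V P C.
Arguments PTrue {V P C}. Arguments PEq {V P C}. Arguments POrd {V P C}.
Arguments PNot {V P C}. Arguments PAnd {V P C}.

Definition dprecond (D : DataModel) (W : DAWnet D) :=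
  precond (dvar D) (place W) (dval D).

Definition zeval (D : DataModel) (W : DAWnet D) (s : pstate W)
  (z : zterm (dvar D) (place W) (dval D)) : pval (dval D) :=
  match z with ZC a => a | ZS x => s x end.

Fixpoint psat (D : DataModel) (W : DAWnet D) (s : pstate W)
  (p : dprecond W) : Prop :=
  match p with
  | PTrue => True
  | PEq z1 z2 => zeval s z1 = zeval s z2
  | POrd z1 z2 => ordRel (zeval s z1) (zeval s z2)
  | PNot p => ~ psat s p
  | PAnd p1 p2 => psat s p1 /\ psat s p2
  end.

(* Translation [.] : partial (only v = t2 with a variable on the left). *)
Definition tr_term (D : DataModel) (W : DAWnet D)
  (t : term (dvar D) (dval D)) : zterm (dvar D) (place W) (dval D) :=
  match t with TVar v => ZS (SVar v) | TConst c => ZC (PConst c) end.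

Fixpoint translate (D : DataModel) (W : DAWnet D) (g : dguard D)
  : option (dprecond W) :=
  match g with
  | GTrue => Some PTrue
  | GDef v => Some (PNot (PEq (ZS (SVar v)) (ZC PNull)))
  | GEq (TVar v) t2 =>
      Some (PAnd (PNot (PEq (ZS (SVar v)) (ZC PNull)))
                 (PEq (ZS (SVar v)) (tr_term W t2)))
  | GEq (TConst _) _ => None
  | GLe t1 t2 => Some (POrd (tr_term W t1) (tr_term W t2))
  | GNot g => omap PNot (translate W g)
  | GAnd g1 g2 =>
      match translate W g1, translate W g2 with
      | Some p1, Some p2 => Some (PAnd p1 p2)
      | _, _ => None
      end
  end.

From mathcomp Require Import all_boot.
From Stdlib Require Import Setoid.

(** The translation is compositional and [Psi] maps an undefined variable to
    [null] and a defined one to its value, so [t[eta]] is a constant [c]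
    exactly when the translated term evaluates to [c] in [Psi(M, eta)].
    Atoms therefore agree case by case, and the connectives follow by
    structural induction. *)

Section Translation.

Variables (D : DataModel) (W : DAWnet D) (M : marking W) (eta : assignment D).

Local Notation zeval_tr t := (zeval (Psi M eta) (tr_term W t)).

Lemma zeval_tr_termE (t : term (dvar D) (dval D)) (c : dval D) :
  zeval_tr t = PConst c <-> term_subst eta t = TConst c.
Proof.
case: t => [v|c'] /=; last by split; case=> ->.
by case: (eta v) => [a|]; split=> //; case=> ->.
Qed.

Lemma gsat_GEq (t1 t2 : term (dvar D) (dval D)) :
  gsat eta (GEq t1 t2) <->
  exists c, zeval_tr t1 = PConst c /\ zeval_tr t2 = PConst c.
Proof.
split=> [[c1 [c2 [h1 [h2 e]]]] | [c [h1 h2]]].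
  by subst c2; exists c1; split; apply/zeval_tr_termE.
by exists c, c; split; [apply/zeval_tr_termE | split; first apply/zeval_tr_termE].
Qed.

Lemma gsat_GLe (t1 t2 : term (dvar D) (dval D)) :
  gsat eta (GLe t1 t2) <-> ordRel (zeval_tr t1) (zeval_tr t2).
Proof.
split=> [[c1 [c2 [h1 [h2 [i [le [hle [m1 [m2 l]]]]]]]]] |
         [i [le [c1 [c2 [hle [h1 [h2 [m1 [m2 l]]]]]]]]]].
  exists i, le, c1, c2; split=> //.
  by split; [exact/zeval_tr_termE | split; first exact/zeval_tr_termE].
exists c1, c2; split; first exact/zeval_tr_termE.
by split; [exact/zeval_tr_termE | exists i, le].
Qed.

Lemma translate_correct (Phi : dguard D) (p : dprecond W) :
  translate W Phi = Some p -> (gsat eta Phi <-> psat (Psi M eta) p).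
Proof.
elim: Phi p => [|v|t1 t2|t1 t2|g IH|g1 IH1 g2 IH2] p.
- by case=> <-.
- by case=> <- /=; case: (eta v).
- case: t1 => [v|//] [<-]; rewrite gsat_GEq /=.
  case: (eta v) => [a|]; last by split=> [[c [] //] | []].
  by split=> [[c [[<-] ->]] | [_ <-]] //; exists a.
- by case=> <-; exact: gsat_GLe.
- by rewrite /=; case E: (translate W g) => [q|] //= [<-] /=; rewrite (IH q E).
- rewrite /=; case E1: (translate W g1) => [q1|] //.
  case E2: (translate W g2) => [q2|] // [<-] /=.
  by rewrite (IH1 q1 E1) (IH2 q2 E2).
Qed.

End Translation.

Theorem mainTheorem7 (D : DataModel) (W : DAWnet D)
  (M : marking W) (eta : assignment D) :
  assignment_ok eta ->
  (forall v, eta v <> None -> var_in_net W v) ->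
  forall (Phi : dguard D) (p : dprecond W),
    guard_wf Phi ->
    (forall v, guard_has_var v Phi -> var_in_net W v) ->
    translate W Phi = Some p ->
    (gsat eta Phi <-> psat (Psi M eta) p).
Proof. by move=> _ _ Phi p _ _; exact: translate_correct. Qed.
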